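(* Let $(\mathcal M,\circ,I,\bullet,J)$ be a duoidal category and let $A$ be a bimonoid in it, i.e. an object with a monoid structure $(\mu:A\circ A\to A,\ \eta:I\to A)$ in $(\mathcal M,\circ,I)$ and a comonoid structure $(\Delta:A\to A\bullet A,\ \varepsilon:A\to J)$ in $(\mathcal M,\bullet,J)$ such that $\Delta\cdot\mu=(\mu\bullet\mu)\cdot\zeta_{A,A,A,A}\cdot(\Delta\circ\Delta)$, $\Delta\cdot\eta=(\eta\bullet\eta)\cdot\delta$, $\varepsilon\cdot\mu=\varpi\cdot(\varepsilon\circ\varepsilon)$ and $\varepsilon\cdot\eta=\tau$. Then $A$ is a right weak bimonoid, i.e. it satisfies the axioms (WB), (RRU), (LRU), (LRC) and (LLC) listed in the context.
   Context: Composition of morphisms is written $g\cdot f$ ($f$ first). Associativity and unit isomorphisms of both monoidal products are suppressed (e.g. $X\circ I=X$, $J\bullet X=X$). A duoidal category $(\mathcal M,\circ,I,\bullet,J)$ is a category $\mathcal M$ with two monoidal structures $(\circ,I)$ and $(\bullet,J)$, morphisms $\delta:I\to I\bullet I$, $\varpi:J\circ J\to J$, $\tau:I\to J$, and a natural transformation $\zeta_{A,B,C,D}:(A\bullet B)\circ(C\bullet D)\to(A\circ C)\bullet(B\circ D)$ such that: $(J,\varpi,\tau)$ is a monoid in $(\mathcal M,\circ,I)$; $(I,\delta,\tau)$ is a comonoid in $(\mathcal M,\bullet,J)$; for all objects, $\zeta_{A,B,C\circ E,D\circ F}\cdot((A\bullet B)\circ\zeta_{C,D,E,F})=\zeta_{A\circ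 C,B\circ D,E,F}\cdot(\zeta_{A,B,C,D}\circ(E\bullet F))$ and $((A\circ D)\bullet\zeta_{B,C,E,F})\cdot\zeta_{A,B\bullet C,D,E\bullet F}=(\zeta_{A,B,D,E}\bullet(C\circ F))\cdot\zeta_{A\bullet B,C,D\bullet E,F}$; and $\zeta_{I,I,A,B}\cdot(\delta\circ(A\bullet B))=\mathrm{id}_{A\bullet B}=\zeta_{A,B,I,I}\cdot((A\bullet B)\circ\delta)$, $(\varpi\bullet(A\circ B))\cdot\zeta_{J,A,J,B}=\mathrm{id}_{A\circ B}=((A\circ B)\bullet\varpi)\cdot\zeta_{A,J,B,J}$. For $A$ with monoid structure $(\mu,\eta)$ in $(\mathcal M,\circ,I)$ and comonoid structure $(\Delta,\varepsilon)$ in $(\mathcal M,\bullet,J)$, put $e:=\Delta\cdot\eta:I\to A\bullet A$ and $\bar\mu:=\varepsilon\cdot\mu:A\circ A\to J$. The axioms are: (WB) $\Delta\cdot\mu=(\mu\bullet\mu)\cdot\zeta_{A,A,A,A}\cdot(\Delta\circ\Delta)$. (RRU) $(I\bullet A\bullet\mu\bullet A)\cdot(\zeta_{I,A,I\bullet A,A}\bullet A)\cdot(((I\bullet A)\circ(I\bullet e))\bullet A)\cdot(((I\bullet A)\circ\delta)\bullet A)\cdot(I\bullet e)\cdot\delta=(I\bullet A\bullet\Delta)\cdot(I\bullet\Delta)\cdot(I\bullet\eta)\cdot\delta$ as morphisms $I\to I\bullet A\bullet A\bullet A$. (LRU) $(A\bullet\mu\bullet A\bullet I)\cdot(A\bullet\zeta_{A,I,A,A\bullet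 I})\cdot(A\bullet((A\bullet I)\circ(e\bullet I)))\cdot(A\bullet((A\bullet I)\circ\delta))\cdot(e\bullet I)\cdot\delta=(\Delta\bullet A\bullet I)\cdot(\Delta\bullet I)\cdot(\eta\bullet I)\cdot\delta$ as morphisms $I\to A\bullet A\bullet A\bullet I$. (LRC) $\varpi\cdot(J\circ\bar\mu)\cdot((\varpi\bullet(J\circ A))\circ A)\cdot(((J\circ\bar\mu)\bullet(J\circ A))\circ A)\cdot(\zeta_{J\circ A,J,A,A}\circ A)\cdot(J\circ A\circ\Delta\circ A)=\varpi\cdot(J\circ\varepsilon)\cdot(J\circ\mu)\cdot(J\circ A\circ\mu)$ as morphisms $J\circ A\circ A\circ A\to J$. (LLC) $\varpi\cdot(J\circ\bar\mu)\cdot(((J\circ A)\bullet\varpi)\circ A)\cdot(((J\circ A)\bullet(J\circ\bar\mu))\circ A)\cdot(\zeta_{J,J\circ A,A,A}\circ A)\cdot(J\circ A\circ\Delta\circ A)=\varpi\cdot(J\circ\varepsilon)\cdot(J\circ\mu)\cdot(J\circ A\circ\mu)$. *)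

(* A category is presented "arrows-only": a type of objects, a type of
   morphisms with domain/codomain, identities and composition
   [comp g f] = g . f (f first), whose axioms are required for composable
   pairs.  Both monoidal structures are STRICT (the paper suppresses the
   associativity and unit isomorphisms), so the strictness equations hold on
   objects and on morphisms. *)

Record Duoidal := {
  Ob : Type;
  Mor : Type;
  dom : Mor -> Ob;
  cod : Mor -> Ob;
  idm : Ob -> Mor;
  comp : Mor -> Mor -> Mor;
  dom_idm : forall X, dom (idm X) = X;
  cod_idm : forall X, cod (idm X) = X;
  dom_comp : forall g f, cod f = dom g -> dom (comp g f) = dom f;
  cod_comp : forall g f, cod f = dom g -> cod (comp g f) = cod g;
  comp_idm_r : forall f, comp f (idm (dom f)) = f;
  comp_idm_l : forall f, comp (idm (cod f)) f = f;
  comp_assoc : forall h g f, cod f = dom g -> cod g = dom h ->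
    comp h (comp g f) = comp (comp h g) f;

  oO : Ob -> Ob -> Ob;
  mO : Mor -> Mor -> Mor;
  I : Ob;
  dom_mO : forall f g, dom (mO f g) = oO (dom f) (dom g);
  cod_mO : forall f g, cod (mO f g) = oO (cod f) (cod g);
  mO_idm : forall X Y, mO (idm X) (idm Y) = idm (oO X Y);
  mO_comp : forall g f g' f', cod f = dom g -> cod f' = dom g' ->
    mO (comp g f) (comp g' f') = comp (mO g g') (mO f f');
  oO_assoc : forall X Y Z, oO (oO X Y) Z = oO X (oO Y Z);
  mO_assoc : forall f g h, mO (mO f g) h = mO f (mO g h);
  oO_unitl : forall X, oO I X = X;
  oO_unitr : forall X, oO X I = X;
  mO_unitl : forall f, mO (idm I) f = f;
  mO_unitr : forall f, mO f (idm I) = f;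

  oB : Ob -> Ob -> Ob;
  mB : Mor -> Mor -> Mor;
  J : Ob;
  dom_mB : forall f g, dom (mB f g) = oB (dom f) (dom g);
  cod_mB : forall f g, cod (mB f g) = oB (cod f) (cod g);
  mB_idm : forall X Y, mB (idm X) (idm Y) = idm (oB X Y);
  mB_comp : forall g f g' f', cod f = dom g -> cod f' = dom g' ->
    mB (comp g f) (comp g' f') = comp (mB g g') (mB f f');
  oB_assoc : forall X Y Z, oB (oB X Y) Z = oB X (oB Y Z);
  mB_assoc : forall f g h, mB (mB f g) h = mB f (mB g h);
  oB_unitl : forall X, oB J X = X;
  oB_unitr : forall X, oB X J = X;
  mB_unitl : forall f, mB (idm J) f = f;
  mB_unitr : forall f, mB f (idm J) = f;

  delta : Mor;
  varpi : Mor;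
  tau : Mor;
  zeta : Ob -> Ob -> Ob -> Ob -> Mor;
  dom_delta : dom delta = I;  cod_delta : cod delta = oB I I;
  dom_varpi : dom varpi = oO J J;  cod_varpi : cod varpi = J;
  dom_tau : dom tau = I;  cod_tau : cod tau = J;
  dom_zeta : forall A B C D, dom (zeta A B C D) = oO (oB A B) (oB C D);
  cod_zeta : forall A B C D, cod (zeta A B C D) = oB (oO A C) (oO B D);
  zeta_nat : forall f1 f2 f3 f4,
    comp (zeta (cod f1) (cod f2) (cod f3) (cod f4)) (mO (mB f1 f2) (mB f3 f4))
    = comp (mB (mO f1 f3) (mO f2 f4)) (zeta (dom f1) (dom f2) (dom f3) (dom f4));

  varpi_assoc : comp varpi (mO varpi (idm J)) = comp varpi (mO (idm J) varpi);
  varpi_unitl : comp varpi (mO tau (idm J)) = idm J;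
  varpi_unitr : comp varpi (mO (idm J) tau) = idm J;
  delta_coassoc : comp (mB delta (idm I)) delta = comp (mB (idm I) delta) delta;
  delta_counitl : comp (mB tau (idm I)) delta = idm I;
  delta_counitr : comp (mB (idm I) tau) delta = idm I;

  zeta_assoc1 : forall A B C D E F,
    comp (zeta A B (oO C E) (oO D F)) (mO (idm (oB A B)) (zeta C D E F))
    = comp (zeta (oO A C) (oO B D) E F) (mO (zeta A B C D) (idm (oB E F)));
  zeta_assoc2 : forall A B C D E F,
    comp (mB (idm (oO A D)) (zeta B C E F)) (zeta A (oB B C) D (oB E F))
    = comp (mB (zeta A B D E) (idm (oO C F))) (zeta (oB A B) C (oB D E) F);
  zeta_delta_l : forall A B,
    comp (zeta I I A B) (mO delta (idm (oB A B))) = idm (oB A B);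
  zeta_delta_r : forall A B,
    comp (zeta A B I I) (mO (idm (oB A B)) delta) = idm (oB A B);
  zeta_varpi_l : forall A B,
    comp (mB varpi (idm (oO A B))) (zeta J A J B) = idm (oO A B);
  zeta_varpi_r : forall A B,
    comp (mB (idm (oO A B)) varpi) (zeta A J B J) = idm (oO A B)
}.

Arguments dom {d} _.
Arguments cod {d} _.
Arguments idm {d} _.
Arguments comp {d} _ _.
Arguments oO {d} _ _.
Arguments mO {d} _ _.
Arguments oB {d} _ _.
Arguments mB {d} _ _.
Arguments I {d}.
Arguments J {d}.
Arguments delta {d}.
Arguments varpi {d}.
Arguments tau {d}.
Arguments zeta {d} _ _ _ _.

Section Bimonoids.
Context {d : Duoidal} (A : Ob d) (mu eta Delta eps : Mor d).

Definition is_monoid : Prop :=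
  dom mu = oO A A /\ cod mu = A /\ dom eta = I /\ cod eta = A /\
  comp mu (mO mu (idm A)) = comp mu (mO (idm A) mu) /\
  comp mu (mO eta (idm A)) = idm A /\
  comp mu (mO (idm A) eta) = idm A.

Definition is_comonoid : Prop :=
  dom Delta = A /\ cod Delta = oB A A /\ dom eps = A /\ cod eps = J /\
  comp (mB Delta (idm A)) Delta = comp (mB (idm A) Delta) Delta /\
  comp (mB eps (idm A)) Delta = idm A /\
  comp (mB (idm A) eps) Delta = idm A.

Definition e_ : Mor d := comp Delta eta.
Definition mubar : Mor d := comp eps mu.

Definition WB : Prop :=
  comp Delta mu = comp (mB mu mu) (comp (zeta A A A A) (mO Delta Delta)).

Definition RRU : Prop :=
  let iI := idm (@I d) in let iA := idm A in
  comp (mB iI (mB iA (mB mu iA)))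
   (comp (mB (zeta I A (oB I A) A) iA)
    (comp (mB (mO (mB iI iA) (mB iI e_)) iA)
     (comp (mB (mO (mB iI iA) delta) iA)
      (comp (mB iI e_) delta))))
  = comp (mB iI (mB iA Delta)) (comp (mB iI Delta) (comp (mB iI eta) delta)).

Definition LRU : Prop :=
  let iI := idm (@I d) in let iA := idm A in
  comp (mB iA (mB mu (mB iA iI)))
   (comp (mB iA (zeta A I A (oB A I)))
    (comp (mB iA (mO (mB iA iI) (mB e_ iI)))
     (comp (mB iA (mO (mB iA iI) delta))
      (comp (mB e_ iI) delta))))
  = comp (mB Delta (mB iA iI)) (comp (mB Delta iI) (comp (mB eta iI) delta)).

Definition LRC : Prop :=
  let iJ := idm (@J d) in let iA := idm A in
  comp varpi
   (comp (mO iJ mubar)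
    (comp (mO (mB varpi (mO iJ iA)) iA)
     (comp (mO (mB (mO iJ mubar) (mO iJ iA)) iA)
      (comp (mO (zeta (oO J A) J A A) iA)
       (mO iJ (mO iA (mO Delta iA)))))))
  = comp varpi (comp (mO iJ eps) (comp (mO iJ mu) (mO iJ (mO iA mu)))).

Definition LLC : Prop :=
  let iJ := idm (@J d) in let iA := idm A in
  comp varpi
   (comp (mO iJ mubar)
    (comp (mO (mB (mO iJ iA) varpi) iA)
     (comp (mO (mB (mO iJ iA) (mO iJ mubar)) iA)
      (comp (mO (zeta J (oO J A) A A) iA)
       (mO iJ (mO iA (mO Delta iA)))))))
  = comp varpi (comp (mO iJ eps) (comp (mO iJ mu) (mO iJ (mO iA mu)))).

Definition right_weak_bimonoid : Prop := WB /\ RRU /\ LRU /\ LRC /\ LLC.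

End Bimonoids.

(* For a bimonoid the unit e of a weak bimonoid is (eta . eta) delta and the
   map mubar is varpi (eps o eps).  In (RRU) all occurrences of eta can then be
   moved to the front by naturality of zeta; the multiplications they meet
   collapse by the unit law, and what remains is an identity between maps built
   from delta and zeta alone, which follows from coassociativity of delta and
   the unit axiom zeta_{I,I,A,B} (delta o 1) = 1.  Dually, in (LRC) all
   occurrences of eps are moved to the back, leaving an identity about varpi
   and zeta.  (LRU) and (LLC) are (RRU) and (LRC) for the duoidal structure
   with the reversed second product, and (WB) is a hypothesis. *)

From Stdlib Require Import Setoid.

Ltac norm_ob :=
  repeat progress rewrite ?oO_assoc, ?oB_assoc, ?oO_unitl, ?oO_unitr,
    ?oB_unitl, ?oB_unitr.

Ltac solve_types :=
  repeat first
   [ rewrite dom_idm | rewrite cod_idm | rewrite dom_mO | rewrite cod_mO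
   | rewrite dom_mB | rewrite cod_mB | rewrite dom_zeta | rewrite cod_zeta
   | rewrite dom_delta | rewrite cod_delta | rewrite dom_varpi
   | rewrite cod_varpi | rewrite dom_tau | rewrite cod_tau
   | match goal with H : dom _ = _ |- _ => rewrite H end
   | match goal with H : cod _ = _ |- _ => rewrite H end
   | (rewrite dom_comp; [| solve [solve_types]])
   | (rewrite cod_comp; [| solve [solve_types]]) ];
  norm_ob; reflexivity.

Section Functoriality.
Context {d : Duoidal}.
Implicit Types (f g h : Mor d) (X : Ob d).

Lemma comp_idm_r' f X : dom f = X -> comp f (idm X) = f.
Proof. intros <-; apply comp_idm_r. Qed.

Lemma comp_idm_l' f X : cod f = X -> comp (idm X) f = f.
Proof. intros <-; apply comp_idm_l. Qed.

Lemma mB_comp_idm g f X : cod f = dom g ->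
  mB (comp g f) (idm X) = comp (mB g (idm X)) (mB f (idm X)).
Proof.
  intros H. rewrite <- mB_comp by solve_types.
  now rewrite comp_idm_l' by solve_types.
Qed.

Lemma mB_idm_comp g f X : cod f = dom g ->
  mB (idm X) (comp g f) = comp (mB (idm X) g) (mB (idm X) f).
Proof.
  intros H. rewrite <- mB_comp by solve_types.
  now rewrite comp_idm_l' by solve_types.
Qed.

Lemma mO_comp_idm g f X : cod f = dom g ->
  mO (comp g f) (idm X) = comp (mO g (idm X)) (mO f (idm X)).
Proof.
  intros H. rewrite <- mO_comp by solve_types.
  now rewrite comp_idm_l' by solve_types.
Qed.

Lemma mO_idm_comp g f X : cod f = dom g ->
  mO (idm X) (comp g f) = comp (mO (idm X) g) (mO (idm X) f).
Proof.
  intros H. rewrite <- mO_comp by solve_types.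
  now rewrite comp_idm_l' by solve_types.
Qed.

Lemma mO_split f g : mO f g = comp (mO f (idm (cod g))) (mO (idm (dom f)) g).
Proof.
  rewrite <- mO_comp by solve_types.
  now rewrite comp_idm_r', comp_idm_l' by solve_types.
Qed.

Lemma mB_split' f g : mB f g = comp (mB (idm (cod f)) g) (mB f (idm (dom g))).
Proof.
  rewrite <- mB_comp by solve_types.
  now rewrite comp_idm_r', comp_idm_l' by solve_types.
Qed.

Lemma mB_compl g f h : cod f = dom g ->
  mB (comp g f) h = comp (mB g h) (mB f (idm (dom h))).
Proof.
  intros H. rewrite <- mB_comp by solve_types.
  now rewrite comp_idm_r' by solve_types.
Qed.

Lemma mB_compr h g f : cod f = dom g ->
  mB h (comp g f) = comp (mB h g) (mB (idm (dom h)) f).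
Proof.
  intros H. rewrite <- mB_comp by solve_types.
  now rewrite comp_idm_r' by solve_types.
Qed.

Lemma mB_compl' g f h : cod f = dom g ->
  mB (comp g f) h = comp (mB g (idm (cod h))) (mB f h).
Proof.
  intros H. rewrite <- mB_comp by solve_types.
  now rewrite comp_idm_l' by solve_types.
Qed.

Lemma mO_compl' g f h : cod f = dom g ->
  mO (comp g f) h = comp (mO g (idm (cod h))) (mO f h).
Proof.
  intros H. rewrite <- mO_comp by solve_types.
  now rewrite comp_idm_l' by solve_types.
Qed.

Lemma mO_compr' h g f : cod f = dom g ->
  mO h (comp g f) = comp (mO (idm (cod h)) g) (mO h f).
Proof.
  intros H. rewrite <- mO_comp by solve_types.
  now rewrite comp_idm_l' by solve_types.
Qed.

Lemma comp_mO_idm_I f g X : cod f = X -> dom g = I ->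
  comp (mO (idm X) g) f = mO f g.
Proof.
  intros Hf Hg. rewrite <- (mO_unitr _ f) at 1.
  rewrite <- mO_comp by solve_types.
  now rewrite comp_idm_l', comp_idm_r' by solve_types.
Qed.

Lemma comp_mB_J_idm f g X : cod g = J -> dom f = X ->
  comp f (mB g (idm X)) = mB g f.
Proof.
  intros Hg Hf. rewrite <- (mB_unitl _ f) at 1.
  rewrite <- mB_comp by solve_types.
  now rewrite comp_idm_l', comp_idm_r' by solve_types.
Qed.

Lemma zeta_nat_at f1 f2 f3 f4 X1 X2 X3 X4 Y1 Y2 Y3 Y4 :
  cod f1 = X1 -> cod f2 = X2 -> cod f3 = X3 -> cod f4 = X4 ->
  dom f1 = Y1 -> dom f2 = Y2 -> dom f3 = Y3 -> dom f4 = Y4 ->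
  comp (zeta X1 X2 X3 X4) (mO (mB f1 f2) (mB f3 f4))
  = comp (mB (mO f1 f3) (mO f2 f4)) (zeta Y1 Y2 Y3 Y4).
Proof. intros <- <- <- <- <- <- <- <-. apply zeta_nat. Qed.

End Functoriality.

Definition bullet_rev (d : Duoidal) : Duoidal := {|
  Ob := Ob d; Mor := Mor d; dom := @dom d; cod := @cod d; idm := @idm d;
  comp := @comp d;
  dom_idm := dom_idm d; cod_idm := cod_idm d; dom_comp := dom_comp d;
  cod_comp := cod_comp d; comp_idm_r := comp_idm_r d;
  comp_idm_l := comp_idm_l d; comp_assoc := comp_assoc d;
  oO := @oO d; mO := @mO d; I := @I d;
  dom_mO := dom_mO d; cod_mO := cod_mO d; mO_idm := mO_idm d;
  mO_comp := mO_comp d; oO_assoc := oO_assoc d; mO_assoc := mO_assoc d;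
  oO_unitl := oO_unitl d; oO_unitr := oO_unitr d;
  mO_unitl := mO_unitl d; mO_unitr := mO_unitr d;
  oB X Y := oB Y X; mB f g := mB g f; J := @J d;
  dom_mB f g := dom_mB d g f; cod_mB f g := cod_mB d g f;
  mB_idm X Y := mB_idm d Y X;
  mB_comp g f g' f' H H' := mB_comp d g' f' g f H' H;
  oB_assoc X Y Z := eq_sym (oB_assoc d Z Y X);
  mB_assoc f g h := eq_sym (mB_assoc d h g f);
  oB_unitl := oB_unitr d; oB_unitr := oB_unitl d;
  mB_unitl := mB_unitr d; mB_unitr := mB_unitl d;
  delta := @delta d; varpi := @varpi d; tau := @tau d;
  zeta A B C D := zeta B A D C;
  dom_delta := dom_delta d; cod_delta := cod_delta d;
  dom_varpi := dom_varpi d; cod_varpi := cod_varpi d;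
  dom_tau := dom_tau d; cod_tau := cod_tau d;
  dom_zeta A B C D := dom_zeta d B A D C;
  cod_zeta A B C D := cod_zeta d B A D C;
  zeta_nat f1 f2 f3 f4 := zeta_nat d f2 f1 f4 f3;
  varpi_assoc := varpi_assoc d; varpi_unitl := varpi_unitl d;
  varpi_unitr := varpi_unitr d;
  delta_coassoc := eq_sym (delta_coassoc d);
  delta_counitl := delta_counitr d; delta_counitr := delta_counitl d;
  zeta_assoc1 A B C D E F := zeta_assoc1 d B A D C F E;
  zeta_assoc2 A B C D E F := eq_sym (zeta_assoc2 d C B A F E D);
  zeta_delta_l A B := zeta_delta_l d B A;
  zeta_delta_r A B := zeta_delta_r d B A;
  zeta_varpi_l A B := zeta_varpi_r d A B;
  zeta_varpi_r A B := zeta_varpi_l d A B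
|}.

Lemma LRU_bullet_rev (d : Duoidal) (A : Ob d) (mu eta Delta : Mor d) :
  RRU (d := bullet_rev d) A mu eta Delta -> LRU A mu eta Delta.
Proof. intros H. unfold RRU in H; cbn in H. rewrite !mB_assoc in H. exact H. Qed.

Lemma LLC_bullet_rev (d : Duoidal) (A : Ob d) (mu Delta eps : Mor d) :
  LRC (d := bullet_rev d) A mu Delta eps -> LLC A mu Delta eps.
Proof. exact id. Qed.

Section Coherence.
Context {d : Duoidal}.

Lemma zeta_delta_coassoc :
  let D3 := comp (mB (idm I) delta) (@delta d) in
  comp (mB (zeta I I (oB I I) I) (idm I))
    (comp (mB (mO (idm (oB I I)) D3) (idm I)) D3)
  = comp (mB (idm I) D3) delta.
Proof.
  intros D3; subst D3.
  rewrite <- delta_coassoc at 2.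
  rewrite (comp_assoc _ (mB (mO _ _) _)) by solve_types.
  rewrite <- mB_comp by solve_types.
  rewrite (comp_assoc _ (mB (zeta _ _ _ _) _)) by solve_types.
  rewrite <- mB_comp by solve_types.
  rewrite !comp_idm_r' by solve_types.
  rewrite (comp_mO_idm_I delta) by solve_types.
  rewrite (mO_split delta), dom_delta, mO_unitl.
  replace (cod (comp (mB (idm I) delta) delta)) with (oB (oB (@I d) I) I)
    by solve_types.
  rewrite comp_assoc, zeta_delta_l, comp_idm_l' by solve_types.
  rewrite mB_comp_idm, <- comp_assoc, delta_coassoc, mB_assoc by solve_types.
  rewrite comp_assoc, <- mB_idm_comp, delta_coassoc by solve_types.
  reflexivity.
Qed.

Lemma zeta_varpi_assoc :
  comp (mB (comp varpi (mO (idm J) varpi)) (idm (oO J J))) (zeta (oO J J) J J J)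
  = mO (@varpi d) (idm J).
Proof.
  rewrite <- varpi_assoc, mB_compl' by solve_types. rewrite cod_idm.
  rewrite <- comp_assoc, <- mO_idm by solve_types.
  rewrite <- (zeta_nat_at varpi (idm J) (idm J) (idm J) J J J J (oO J J) J J J)
    by solve_types.
  rewrite mB_unitr, mB_idm, oB_unitl.
  rewrite comp_assoc, mO_idm, zeta_varpi_l, comp_idm_l' by solve_types.
  reflexivity.
Qed.

Lemma varpi_assoc3 :
  comp varpi (comp (mO (idm J) varpi) (mO varpi (idm (oO J J))))
  = comp (@varpi d) (comp (mO (idm J) varpi) (mO (idm J) (mO (idm J) varpi))).
Proof.
  rewrite <- mO_comp, comp_idm_l', comp_idm_r' by solve_types.
  rewrite (mO_split varpi varpi), cod_varpi, dom_varpi.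
  rewrite comp_assoc, varpi_assoc, <- comp_assoc by solve_types.
  rewrite <- mO_idm, mO_assoc. reflexivity.
Qed.

End Coherence.

Lemma mul_unit_unit {d : Duoidal} (A : Ob d) (mu eta : Mor d) :
  dom mu = oO A A -> cod mu = A -> dom eta = I -> cod eta = A ->
  comp mu (mO eta (idm A)) = idm A -> comp mu (mO eta eta) = eta.
Proof.
  intros dmu cmu deta ceta mul.
  rewrite mO_split, deta, mO_unitl, ceta.
  rewrite comp_assoc, mul, comp_idm_l' by solve_types. reflexivity.
Qed.

Lemma counit_counit_comul {d : Duoidal} (A : Ob d) (Delta eps : Mor d) :
  dom Delta = A -> cod Delta = oB A A -> dom eps = A -> cod eps = J ->
  comp (mB eps (idm A)) Delta = idm A -> comp (mB eps eps) Delta = eps.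
Proof.
  intros dD cD de ce cul.
  rewrite (mB_split' eps eps), ce, de, mB_unitl.
  rewrite <- comp_assoc, cul, comp_idm_r' by solve_types. reflexivity.
Qed.

Section RightUnit.
Context {d : Duoidal} (A : Ob d) (mu eta Delta : Mor d).
Hypotheses (dom_mu : dom mu = oO A A) (cod_mu : cod mu = A)
  (dom_eta : dom eta = I) (cod_eta : cod eta = A)
  (dom_Delta : dom Delta = A) (cod_Delta : cod Delta = oB A A).
Hypothesis mu_eta_eta : comp mu (mO eta eta) = eta.
Hypothesis Delta_eta : comp Delta eta = comp (mB eta eta) delta.

Lemma RRU_lhs_units (P : Mor d) : dom P = I -> cod P = oB I (oB I I) ->
  comp (mB (mO (idm (oB I A)) (comp (mB (idm I) (mB eta eta)) P)) (idm A))
       (comp (mB (idm I) (mB eta eta)) P)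
  = comp (mB (mO (mB (idm I) eta) (mB (idm I) (mB eta eta))) eta)
         (comp (mB (mO (idm (oB I I)) P) (idm I)) P).
Proof.
  intros dP cP.
  rewrite <- mB_assoc at 2. rewrite comp_assoc by solve_types.
  rewrite <- mB_comp, (comp_idm_l' eta), comp_mO_idm_I by solve_types.
  rewrite <- (comp_idm_r' (mB (idm I) eta) (oB I I)) at 1 by solve_types.
  rewrite mO_comp, mB_compl by solve_types. rewrite dom_eta.
  rewrite <- comp_assoc by solve_types. reflexivity.
Qed.

Lemma RRU_units_through_zeta :
  comp (mB (idm I) (mB (idm A) (mB mu (idm A))))
    (comp (mB (zeta I A (oB I A) A) (idm A))
       (mB (mO (mB (idm I) eta) (mB (idm I) (mB eta eta))) eta))
  = comp (mB (idm I) (mB eta (mB eta eta))) (mB (zeta I I (oB I I) I) (idm I)).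
Proof.
  rewrite <- (mB_comp _ (zeta I A (oB I A) A)), (comp_idm_l' eta) by solve_types.
  rewrite <- (mB_assoc _ (idm I) eta eta).
  rewrite (zeta_nat_at (idm I) eta (mB (idm I) eta) eta I A (oB I A) A I I (oB I I) I)
    by solve_types.
  rewrite mO_unitl, mB_compl by solve_types. rewrite dom_eta.
  rewrite comp_assoc by solve_types. f_equal.
  rewrite !mB_assoc, <- !mB_comp, mu_eta_eta, !comp_idm_l' by solve_types.
  reflexivity.
Qed.

Lemma RRU_rhs_units :
  comp (mB (idm I) (mB (idm A) Delta))
    (comp (mB (idm I) Delta) (comp (mB (idm I) eta) delta))
  = comp (mB (idm I) (mB eta (mB eta eta)))
      (comp (mB (idm I) (comp (mB (idm I) delta) delta)) delta).
Proof.
  rewrite (comp_assoc _ (mB (idm I) Delta)), <- mB_idm_comp, Delta_eta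
    by solve_types.
  rewrite comp_assoc, <- mB_idm_comp by solve_types.
  rewrite (comp_assoc _ (mB (idm A) Delta)), <- mB_comp, Delta_eta, comp_idm_l'
    by solve_types.
  rewrite (mB_compr eta) by solve_types. rewrite dom_eta.
  rewrite <- (comp_assoc _ (mB eta (mB eta eta))), (mB_idm_comp (mB eta (mB eta eta)))
    by solve_types.
  rewrite <- comp_assoc by solve_types. reflexivity.
Qed.

Lemma RRU_of_comul_unit : RRU A mu eta Delta.
Proof.
  unfold RRU, e_; cbv zeta. rewrite Delta_eta, !mB_idm.
  rewrite (comp_assoc _ (mB (mO _ (mB _ _)) _) (mB (mO _ delta) _)) by solve_types.
  rewrite <- mB_comp_idm, <- mO_idm_comp, mB_idm_comp by solve_types.
  rewrite <- (comp_assoc _ (mB (idm I) (mB eta eta))), RRU_lhs_units by solve_types.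
  rewrite (comp_assoc _ (mB (zeta _ _ _ _) _)) by solve_types.
  rewrite (comp_assoc _ (mB (idm I) (mB (idm A) (mB mu (idm A))))) by solve_types.
  rewrite RRU_units_through_zeta, RRU_rhs_units, <- comp_assoc by solve_types.
  f_equal. apply zeta_delta_coassoc.
Qed.

End RightUnit.

Section LeftCounit.
Context {d : Duoidal} (A : Ob d) (mu Delta eps : Mor d).
Hypotheses (dom_mu : dom mu = oO A A) (cod_mu : cod mu = A)
  (dom_Delta : dom Delta = A) (cod_Delta : cod Delta = oB A A)
  (dom_eps : dom eps = A) (cod_eps : cod eps = J).
Hypothesis eps_mu : comp eps mu = comp varpi (mO eps eps).
Hypothesis eps_eps_Delta : comp (mB eps eps) Delta = eps.

Lemma LRC_lhs_counits :
  comp (mO (idm J) (mO eps eps))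
   (comp (mO (mB varpi (idm (oO J A))) (idm A))
    (comp (mO (mB (comp (mO (idm J) varpi) (mO (idm J) (mO eps eps)))
                  (idm (oO J A))) (idm A))
     (comp (mO (zeta (oO J A) J A A) (idm A))
      (mO (idm J) (mO (idm A) (mO Delta (idm A)))))))
  = comp (mO varpi (idm (oO J J))) (mO (idm J) (mO eps (mO eps eps))).
Proof.
  rewrite <- !(mO_assoc _ (idm J) eps eps).
  rewrite (comp_assoc _ (mO (mB varpi _) _)), <- mO_comp_idm, <- mB_comp_idm
    by solve_types.
  rewrite (comp_assoc _ (mO (mO (idm J) eps) eps)), <- mO_comp, (comp_idm_r' eps)
    by solve_types.
  rewrite comp_mB_J_idm by solve_types.
  rewrite (comp_assoc _ varpi), mB_compl' by solve_types.
  rewrite cod_mO, cod_idm, cod_eps.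
  rewrite (comp_assoc _ (mO (comp _ _) eps)), <- mO_comp, (comp_idm_r' eps)
    by solve_types.
  rewrite <- (comp_assoc _ (mB (comp varpi _) _)) by solve_types.
  rewrite <- (zeta_nat_at (mO (idm J) eps) (idm J) eps eps
                (oO J J) J J J (oO J A) J A A) by solve_types.
  rewrite mB_unitr, <- (mO_assoc _ (idm J) (idm A) (mO Delta (idm A))),
    <- (mO_assoc _ (mO (idm J) (idm A)) Delta (idm A)), mO_idm.
  rewrite <- mO_comp, (comp_idm_r' eps) by solve_types.
  rewrite <- !comp_assoc, <- (mO_comp _ (mO (idm J) eps)) by solve_types.
  rewrite (comp_idm_r' (mO (idm J) eps)), eps_eps_Delta by solve_types.
  rewrite comp_assoc, zeta_varpi_assoc, mO_compl' by solve_types.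
  rewrite cod_eps, mO_assoc, mO_idm, !mO_assoc. reflexivity.
Qed.

Lemma LRC_rhs_counits :
  comp (mO (idm J) eps) (comp (mO (idm J) mu) (mO (idm J) (mO (idm A) mu)))
  = comp (mO (idm J) varpi)
      (comp (mO (idm J) (mO (idm J) varpi)) (mO (idm J) (mO eps (mO eps eps)))).
Proof.
  rewrite comp_assoc, <- !mO_idm_comp, eps_mu by solve_types.
  rewrite <- comp_assoc, <- mO_comp, comp_idm_r', eps_mu by solve_types.
  rewrite (mO_compr' eps), cod_eps by solve_types. reflexivity.
Qed.

Lemma LRC_of_counit_mul : LRC A mu Delta eps.
Proof.
  unfold LRC, mubar; cbv zeta. rewrite LRC_rhs_counits, eps_mu, !mO_idm.
  rewrite !mO_idm_comp by solve_types.
  rewrite <- (comp_assoc _ (mO (idm J) varpi)), LRC_lhs_counits by solve_types.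
  rewrite !(comp_assoc _ (mO (idm J) varpi) _ (mO (idm J) (mO eps (mO eps eps))))
    by solve_types.
  rewrite !(comp_assoc _ varpi _ (mO (idm J) (mO eps (mO eps eps)))) by solve_types.
  now rewrite varpi_assoc3.
Qed.

End LeftCounit.

Theorem proposition2p2 (d : Duoidal) (A : Ob d) (mu eta Delta eps : Mor d) :
  is_monoid A mu eta ->
  is_comonoid A Delta eps ->
  comp Delta mu = comp (mB mu mu) (comp (zeta A A A A) (mO Delta Delta)) ->
  comp Delta eta = comp (mB eta eta) delta ->
  comp eps mu = comp varpi (mO eps eps) ->
  comp eps eta = tau ->
  right_weak_bimonoid A mu eta Delta eps.
Proof.
  intros [dom_mu [cod_mu [dom_eta [cod_eta [_ [mu_unitl _]]]]]]
    [dom_Delta [cod_Delta [dom_eps [cod_eps [_ [eps_unitl _]]]]]]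
    HWB Delta_eta eps_mu _.
  pose proof (mul_unit_unit A mu eta dom_mu cod_mu dom_eta cod_eta mu_unitl)
    as mu_eta_eta.
  pose proof (counit_counit_comul A Delta eps dom_Delta cod_Delta dom_eps cod_eps
    eps_unitl) as eps_eps_Delta.
  split; [exact HWB |].
  split; [apply RRU_of_comul_unit; assumption |].
  split; [apply LRU_bullet_rev, RRU_of_comul_unit; assumption |].
  split; [apply LRC_of_counit_mul; assumption |].
  apply LLC_bullet_rev, LRC_of_counit_mul; assumption.
Qed.
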